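(* Let $w,x,y,z$ be nodes of a median graph and $B=\big((I_{yw}\cap I_{xw})\cup(I_{yw}\cap I_{zw})\big)\setminus\{w\}$. Then $B=\emptyset$ if and only if $w\in I_{y\,m(x,y,z)}$.
   Context: $G$ is a finite connected unweighted undirected median graph: with shortest-path distance $d$ and $I_{ab}=\{v:d(a,v)+d(v,b)=d(a,b)\}$, $\lvert I_{ab}\cap I_{ac}\cap I_{bc}\rvert=1$ for all nodes $a,b,c$, and $m(a,b,c)$ denotes that unique node. (In the paper, $B$ is the set of bargaining points of participant $y$ when the current winner is $w$ and the other group members are $x,z$.) *)

From mathcomp Require Import all_boot.
Set Implicit Arguments. Unset Strict Implicit. Unset Printing Implicit Defensive.

Definition simple_graph (T : finType) (e : rel T) : Prop :=
  irreflexive e /\ symmetric e.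

Definition ball (T : finType) (e : rel T) (a : T) (n : nat) : {set T} :=
  iter n (fun S => S :|: [set y | [exists x in S, e x y]]) [set a].

Definition connected_graph (T : finType) (e : rel T) : Prop :=
  forall a b : T, connect e a b.

(* shortest-path distance: least n with b within n steps of a
   (correct whenever b is reachable from a; connected graphs have
   distances < #|T|) *)
Definition dist (T : finType) (e : rel T) (a b : T) : nat :=
  find (fun n => b \in ball e a n) (iota 0 #|T|).

Definition interval (T : finType) (e : rel T) (a b : T) : {set T} :=
  [set v | dist e a v + dist e v b == dist e a b].

Definition median_graph (T : finType) (e : rel T) : Prop :=
  simple_graph e /\ connected_graph e /\
  forall a b c : T,
    #|interval e a b :&: interval e a c :&: interval e b c| = 1.

(* the median m(a,b,c): the unique element of the triple intersection
   (in a median graph); defaults to a otherwise *)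
Definition median (T : finType) (e : rel T) (a b c : T) : T :=
  odflt a [pick v in interval e a b :&: interval e a c :&: interval e b c].

(** Both directions reduce to one fact about median graphs: the intervals
  I_{yx} and I_{yz} meet exactly in I_{y m(x,y,z)}, and w lies in I_{yx} iff
  I_{yw} ∩ I_{xw} = {w}.  For the latter, m(y,w,x) lies in I_{yw} ∩ I_{xw} and
  in I_{yx}; conversely, if w ∈ I_{yx} then any v ∈ I_{yw} ∩ I_{xw} satisfies
  d(y,x) = d(y,w) + d(w,x) = d(y,x) + 2 d(v,w).  For the former, c = m(w,x,z)
  lies in I_{yx} ∩ I_{yz} ∩ I_{xz} whenever w ∈ I_{yx} ∩ I_{yz}, so c is
  m(x,y,z), and w ∈ I_{yc} falls out of the same distance computation. *)

From mathcomp Require Import all_boot.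
From mathcomp Require Import zify.

Set Implicit Arguments.
Unset Strict Implicit.
Unset Printing Implicit Defensive.

Section Balls.
Variables (T : finType) (e : rel T).

Lemma ball0 a : ball e a 0 = [set a].
Proof. by []. Qed.

Lemma ballS a n :
  ball e a n.+1 = ball e a n :|: [set y | [exists x in ball e a n, e x y]].
Proof. by []. Qed.

Lemma ball_trans a b c n m :
  b \in ball e a n -> c \in ball e b m -> c \in ball e a (n + m).
Proof.
move=> ab; elim: m c => [|m IHm] c.
  by rewrite ball0 inE addn0 => /eqP ->.
rewrite addnS !ballS !inE => /orP [/IHm -> //|/existsP [u /andP [bu uc]]].
by apply/orP; right; apply/existsP; exists u; rewrite IHm.
Qed.

Lemma ball1 a b : e a b -> b \in ball e a 1.
Proof.
move=> ab; rewrite ballS ball0 !inE; apply/orP; right.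
by apply/existsP; exists a; rewrite inE eqxx.
Qed.

Lemma ball_sym (esym : symmetric e) a b n : b \in ball e a n -> a \in ball e b n.
Proof.
elim: n b => [|n IHn] b.
  by rewrite ball0 inE => /eqP ->; rewrite ball0 inE.
rewrite ballS inE => /orP [/IHn ba|]; first by rewrite ballS inE ba.
rewrite inE => /existsP [u /andP [au ub]].
rewrite -add1n; apply: (ball_trans (b := u)); last exact: IHn.
by apply: ball1; rewrite esym.
Qed.

Lemma last_path_ball a p : path e a p -> last a p \in ball e a (size p).
Proof.
elim: p a => [|b p IHp] a; first by rewrite inE.
case/andP=> ab bp; exact: ball_trans (ball1 ab) (IHp _ bp).
Qed.

Lemma connect_ball a b : connect e a b -> exists2 n, n < #|T| & b \in ball e a n.
Proof.
case/connectP=> p ap ->; case/shortenP: ap => q aq uq _.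
exists (size q); last exact: last_path_ball.
by rewrite -[_ < _]/(size (a :: q) <= #|T|) -(card_uniqP uq) max_card.
Qed.

Lemma dist_le a b n : b \in ball e a n -> dist e a b <= n.
Proof.
move=> bn; rewrite /dist; case: (leqP #|T| n) => [Tn|nT].
  by apply: leq_trans Tn; rewrite -[X in _ <= X](size_iota 0 #|T|) find_size.
rewrite leqNgt; apply/negP=> /(before_find 0).
by rewrite nth_iota // add0n bn.
Qed.

Lemma mem_ball_dist a b : connect e a b -> b \in ball e a (dist e a b).
Proof.
case/connect_ball=> n nT bn.
have has_n : has (fun k => b \in ball e a k) (iota 0 #|T|).
  by apply/hasP; exists n; rewrite ?mem_iota.
have := nth_find 0 has_n; rewrite nth_iota //.
by move: has_n; rewrite has_find size_iota.
Qed.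

End Balls.

Section Intervals.
Variables (T : finType) (e : rel T).
Hypotheses (esym : symmetric e) (conn : connected_graph e).

Lemma distC a b : dist e a b = dist e b a.
Proof.
by apply/eqP; rewrite eqn_leq !dist_le // (ball_sym esym) // mem_ball_dist.
Qed.

Lemma dist_triangle a b c : dist e a c <= dist e a b + dist e b c.
Proof. by apply/dist_le/ball_trans; apply: mem_ball_dist. Qed.

Lemma dist_eq0 a b : dist e a b = 0 -> a = b.
Proof. by move=> ab0; have := mem_ball_dist (conn a b); rewrite ab0 ball0 inE => /eqP. Qed.

Lemma intervalC a b : interval e a b = interval e b a.
Proof. by apply/setP=> v; rewrite !inE addnC (distC a) (distC v) (distC a b). Qed.

Lemma interval_trans a b u v :
  u \in interval e a b -> v \in interval e u b ->
  v \in interval e a b /\ u \in interval e a v.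
Proof.
rewrite !inE => /eqP aub /eqP uvb.
have := dist_triangle a u v; have := dist_triangle a v b.
by split; apply/eqP; lia.
Qed.

Lemma interval_meet_end a b w v :
  w \in interval e a b -> v \in interval e a w -> v \in interval e b w -> v = w.
Proof.
rewrite !inE => /eqP awb /eqP avw /eqP bvw; apply: dist_eq0.
have := dist_triangle a v b; rewrite (distC b v) (distC b w) in bvw *; lia.
Qed.

Hypothesis median3 : forall a b c : T,
  #|interval e a b :&: interval e a c :&: interval e b c| = 1.

Lemma median_mem a b c :
  median e a b c \in interval e a b :&: interval e a c :&: interval e b c.
Proof.
rewrite /median; case: pickP => [v // | none].
by have := median3 a b c; rewrite (eq_card0 none).
Qed.

Lemma median_unique a b c v :
  v \in interval e a b :&: interval e a c :&: interval e b c -> v = median e a b c.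
Proof.
have := median_mem a b c; have /eqP/cards1P [m ->] := median3 a b c.
by rewrite !inE => /eqP -> /eqP ->.
Qed.

Lemma interval_meet_sub1 y x w :
  (interval e y w :&: interval e x w \subset [set w]) = (w \in interval e y x).
Proof.
apply/idP/idP => [meet | wyx].
  have := median_mem y w x; rewrite !in_setI => /andP [/andP [ywm yxm] wxm].
  suff <- : median e y w x = w by [].
  by apply/set1P/(subsetP meet); rewrite in_setI ywm (intervalC x).
apply/subsetP=> v; rewrite in_setI => /andP [yvw xvw].
by apply/set1P; apply: interval_meet_end wyx yvw xvw.
Qed.

Lemma interval_median y x z :
  interval e y x :&: interval e y z = interval e y (median e x y z).
Proof.
apply/setP=> w; rewrite in_setI; apply/andP/idP => [[wyx wyz] | wym].
  set c := median e w x z.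
  have := median_mem w x z; rewrite !in_setI => /andP [/andP [cwx cwz] cxz].
  have [cyx wyc] := interval_trans wyx cwx.
  have [cyz _] := interval_trans wyz cwz.
  by rewrite -(median_unique (v := c)) // !in_setI (intervalC x) cyx cxz cyz.
have := median_mem x y z; rewrite !in_setI => /andP [/andP [mxy _] myz].
rewrite intervalC in wym; rewrite intervalC in myz.
have [wxy _] := interval_trans mxy wym.
have [wzy _] := interval_trans myz wym.
by rewrite !(intervalC y) wxy wzy.
Qed.

End Intervals.

Theorem lemmaI7 (T : finType) (e : rel T) (w x y z : T) :
  median_graph e ->
  ((interval e y w :&: interval e x w) :|: (interval e y w :&: interval e z w))
     :\ w = set0
  <-> w \in interval e y (median e x y z).
Proof.
case=> [[_ esym] [conn median3]].
rewrite -interval_median // in_setI -!(interval_meet_sub1 esym conn median3).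
by rewrite -subUset -setD_eq0; split=> [-> | /eqP].
Qed.
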